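(* Let $S$ be a finite symmetric generating set of $H(\mathbb{Z})$ and $d_{CC}$ the CC metric on $H(\mathbb{R})$ induced by $\|\cdot\|_L$, where $Q$ is the convex hull of $\pi(S)$ and $L=\partial Q$. There is a constant $C$ such that for every $\epsilon>0$ there is $n_0$ with the following property: for every ${\sf x}\in H(\mathbb{Z})$ with $n=|{\sf x}|_S\ge n_0$, every discrete geodesic from ${\sf 0}$ to ${\sf x}$ is $\epsilon$-linearly tracked by an admissible path whose length $\ell$ satisfies $|\ell-n|\le C\sqrt n$.
   Context: Exponential coordinates on $H(\mathbb{R})$: $(x,y,z)(x',y',z')=(x+x',y+y',z+z'+\tfrac12(xy'-yx'))$, ${\sf 0}=(0,0,0)$; $H(\mathbb{Z})=\{(x,y,z):x,y\in\mathbb{Z},z\in\mathbb{Z}+\epsilon(x,y)\}$ with $\epsilon=1/2$ if $x,y$ both odd, else $0$; $\pi(x,y,z)=(x,y)$. $|\cdot|_S$ is word length. An admissible path satisfies $\gamma_3'=\tfrac12(\gamma_1\gamma_2'-\gamma_2\gamma_1')$; its length is the $\|\cdot\|_L$-length of its projection by $\pi$, where $\|\cdot\|_L$ is the norm with unit ball $Q$; $d_{CC}$ is the induced path metric. A discrete geodesic from ${\sf 0}$ to ${\sf x}$ is the sequence ${\sf x}_0={\sf 0}$, ${\sf x}_i={\sf a}_1\cdots{\sf a}_i$ ($i\le n$) for a minimal-length spelling ${\sf x}={\sf a}_1\cdots{\sf a}_n$ with ${\sf a}_i\in S$. It is $\epsilon$-linearly tracked by an admissible path $\alpha$ if $\alpha$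 has the same endpoints and every ${\sf x}_i$ lies within $d_{CC}$-distance $\epsilon n$ of $\alpha$. *)

From Stdlib Require Import Reals Lra List ZArith ClassicalEpsilon.
Open Scope R_scope.

(** * Heisenberg group H(R) in exponential coordinates *)
Record H3 := mkH { hx : R; hy : R; hz : R }.

Definition hmul (p q : H3) : H3 :=
  mkH (hx p + hx q) (hy p + hy q)
      (hz p + hz q + / 2 * (hx p * hy q - hy p * hx q)).

Definition horigin : H3 := mkH 0 0 0.

Definition hinv (p : H3) : H3 := mkH (- hx p) (- hy p) (- hz p).

Definition inHZ (p : H3) : Prop :=
  exists a b c : Z, hx p = IZR a /\ hy p = IZR b /\
    hz p = IZR c + (if andb (Z.odd a) (Z.odd b) then / 2 else 0).

Definition wprod (w : list H3) : H3 := fold_right hmul horigin w.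

Definition spells (Sg : list H3) (x : H3) (w : list H3) : Prop :=
  (forall s, In s w -> In s Sg) /\ wprod w = x.

Definition generates (Sg : list H3) : Prop :=
  forall x, inHZ x -> exists w, spells Sg x w.

Definition word_length (Sg : list H3) (x : H3) (n : nat) : Prop :=
  (exists w, spells Sg x w /\ length w = n) /\
  (forall w, spells Sg x w -> (n <= length w)%nat).

(** w is a minimal-length spelling of x (a discrete geodesic 0 -> x);
    its i-th vertex is wprod (firstn i w). *)
Definition min_spelling (Sg : list H3) (x : H3) (w : list H3) : Prop :=
  spells Sg x w /\ word_length Sg x (length w).

Definition is_glb (E : R -> Prop) (l : R) : Prop :=
  (forall y, E y -> l <= y) /\ (forall b, (forall y, E y -> b <= y) -> b <= l).

Definition Rinf (E : R -> Prop) : R := epsilon (inhabits 0) (is_glb E).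
Definition Rsup (E : R -> Prop) : R := epsilon (inhabits 0) (is_lub E).

Fixpoint rsum (f : nat -> R) (k : nat) : R :=
  match k with O => 0 | S m => rsum f m + f m end.

(** * The norm ||.||_L whose unit ball is Q = conv(pi(S)) *)
Definition inQ (Sg : list H3) (v1 v2 : R) : Prop :=
  exists lam : nat -> R,
    (forall i, 0 <= lam i) /\ rsum lam (length Sg) = 1 /\
    v1 = rsum (fun i => lam i * hx (nth i Sg horigin)) (length Sg) /\
    v2 = rsum (fun i => lam i * hy (nth i Sg horigin)) (length Sg).

Definition normL (Sg : list H3) (v1 v2 : R) : R :=
  Rinf (fun t => 0 <= t /\ exists q1 q2, inQ Sg q1 q2 /\ v1 = t * q1 /\ v2 = t * q2).

Definition partition (a b : R) (k : nat) (p : nat -> R) : Prop :=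
  p O = a /\ p k = b /\ (forall i, (i < k)%nat -> p i <= p (S i)).

Definition mesh_lt (k : nat) (p : nat -> R) (d : R) : Prop :=
  forall i, (i < k)%nat -> p (S i) - p i < d.

Definition path_continuous (g : R -> H3) : Prop :=
  forall t, 0 <= t <= 1 -> forall e, e > 0 -> exists d, d > 0 /\
    forall s, 0 <= s <= 1 -> Rabs (s - t) < d ->
      Rabs (hx (g s) - hx (g t)) < e /\ Rabs (hy (g s) - hy (g t)) < e /\
      Rabs (hz (g s) - hz (g t)) < e.

Definition var_sum (Sg : list H3) (g : R -> H3) (k : nat) (p : nat -> R) : R :=
  rsum (fun i => normL Sg (hx (g (p (S i))) - hx (g (p i)))
                         (hy (g (p (S i))) - hy (g (p i)))) k.

Definition length_set (Sg : list H3) (g : R -> H3) (v : R) : Prop :=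
  exists k p, partition 0 1 k p /\ v = var_sum Sg g k p.

Definition path_length (Sg : list H3) (g : R -> H3) : R := Rsup (length_set Sg g).

(** Riemann-Stieltjes sum for (1/2) int (g1 dg2 - g2 dg1) *)
Definition area_sum (g : R -> H3) (k : nat) (p : nat -> R) : R :=
  rsum (fun i => / 2 * (hx (g (p i)) * (hy (g (p (S i))) - hy (g (p i)))
                       - hy (g (p i)) * (hx (g (p (S i))) - hx (g (p i))))) k.

(** admissible (horizontal, rectifiable, continuous) path on [0,1]:
    g3' = (1/2)(g1 g2' - g2 g1') in integrated (Riemann-Stieltjes) form *)
Definition admissible (Sg : list H3) (g : R -> H3) : Prop :=
  path_continuous g /\
  (exists M, forall v, length_set Sg g v -> v <= M) /\
  (forall t, 0 <= t <= 1 -> forall e, e > 0 -> exists d, d > 0 /\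
     forall k p, partition 0 t k p -> mesh_lt k p d ->
       Rabs (hz (g t) - hz (g 0) - area_sum g k p) < e).

Definition dCC (Sg : list H3) (p q : H3) : R :=
  Rinf (fun l => exists g, admissible Sg g /\ g 0 = p /\ g 1 = q /\
                           l = path_length Sg g).

Definition dist_to_path (Sg : list H3) (x : H3) (g : R -> H3) : R :=
  Rinf (fun d => exists t, 0 <= t <= 1 /\ d = dCC Sg x (g t)).

Definition lin_tracked (Sg : list H3) (eps : R) (w : list H3) (x : H3)
    (g : R -> H3) : Prop :=
  admissible Sg g /\ g 0 = horigin /\ g 1 = x /\
  forall i, (i <= length w)%nat ->
    dist_to_path Sg (wprod (firstn i w)) g <= eps * INR (length w).

(* A word [w] over [S] factors as the horizontal lift of its planar projection
   times the central element [(0, 0, zsum w)], and [|zsum w| = O(|w|)].  Hence the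
   polygonal path following [π w], closed by a commutator loop of side [O(√n)]
   that climbs the vertical gap, is an admissible path from [0] to [x] passing
   within [O(√n)] of every vertex of the geodesic, each vertex differing from the
   corresponding corner of the polygon by a central element of size [O(n)].
   Since [‖π s‖_L ≤ 1] on [S], the polygon has length at most [n]; padding it by
   going back and forth along a generator makes its length exactly [n], so the
   whole path has length [n + O(√n)], and [O(√n) ≤ ε n] for large [n]. *)

From Stdlib Require Import Reals Lra Lia List ZArith ClassicalEpsilon Classical.
Open Scope R_scope.

Lemma rsum_ext f g k : (forall i, (i < k)%nat -> f i = g i) -> rsum f k = rsum g k.
Proof.
  induction k as [|k IH]; simpl; intros H; auto.
  rewrite IH by (intros; apply H; lia). now rewrite H by lia.
Qed.

Lemma rsum_const0 k : rsum (fun _ => 0) k = 0.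
Proof. induction k as [|k IH]; simpl; lra. Qed.

Lemma rsum_plus f g k : rsum (fun i => f i + g i) k = rsum f k + rsum g k.
Proof. induction k as [|k IH]; simpl; lra. Qed.

Lemma rsum_minus f g k : rsum (fun i => f i - g i) k = rsum f k - rsum g k.
Proof. induction k as [|k IH]; simpl; lra. Qed.

Lemma rsum_scal c f k : rsum (fun i => c * f i) k = c * rsum f k.
Proof. induction k as [|k IH]; simpl; lra. Qed.

Lemma rsum_le f g k : (forall i, (i < k)%nat -> f i <= g i) -> rsum f k <= rsum g k.
Proof.
  induction k as [|k IH]; simpl; intros H; [lra|].
  assert (f k <= g k) by (apply H; lia).
  assert (rsum f k <= rsum g k) by (apply IH; intros; apply H; lia).
  lra.
Qed.

Lemma rsum_nonneg f k : (forall i, (i < k)%nat -> 0 <= f i) -> 0 <= rsum f k.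
Proof. intros H. rewrite <- (rsum_const0 k). now apply rsum_le. Qed.

Lemma rsum_app f k1 k2 :
  rsum f (k1 + k2) = rsum f k1 + rsum (fun j => f (k1 + j)%nat) k2.
Proof.
  induction k2 as [|k2 IH]; simpl.
  - rewrite Nat.add_0_r; lra.
  - rewrite Nat.add_succ_r; simpl; lra.
Qed.

Lemma rsum_telescope a k : rsum (fun i => a (S i) - a i) k = a k - a O.
Proof. induction k as [|k IH]; simpl; lra. Qed.

Lemma Rabs_rsum_le f k : Rabs (rsum f k) <= rsum (fun i => Rabs (f i)) k.
Proof.
  induction k as [|k IH]; simpl.
  - rewrite Rabs_R0; lra.
  - pose proof (Rabs_triang (rsum f k) (f k)); lra.
Qed.

Lemma rsum_term_le f k j : (forall i, 0 <= f i) -> (j < k)%nat -> f j <= rsum f k.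
Proof.
  intros Hf Hj. induction k as [|k IH]; [lia|]. simpl.
  destruct (Nat.eq_dec j k) as [->|Hne].
  - assert (0 <= rsum f k) by (apply rsum_nonneg; auto). lra.
  - assert (f j <= rsum f k) by (apply IH; lia). specialize (Hf k). lra.
Qed.

Lemma rsum_indicator j k x : (j < k)%nat ->
  rsum (fun i => (if Nat.eq_dec i j then 1 else 0) * x i) k = x j.
Proof.
  induction k as [|k IH]; intros Hj; [lia|]. simpl.
  destruct (Nat.eq_dec k j) as [->|Hne].
  - rewrite (rsum_ext _ (fun _ => 0)), rsum_const0; [lra|].
    intros i Hi. destruct (Nat.eq_dec i j); [lia|lra].
  - rewrite IH by lia. lra.
Qed.

Lemma rsum_nonneg_eq0 mu k : (forall i, 0 <= mu i) -> rsum mu k = 0 ->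
  forall i, (i < k)%nat -> mu i = 0.
Proof.
  intros H Hs i Hi. pose proof (rsum_term_le mu k i H Hi). specialize (H i). lra.
Qed.

Lemma glb_exists (E : R -> Prop) m :
  (exists y, E y) -> (forall y, E y -> m <= y) -> exists l, is_glb E l.
Proof.
  intros [y0 Hy0] Hm.
  destruct (completeness (fun x => E (- x))) as [u [Hu1 Hu2]].
  - exists (- m). intros x Hx. specialize (Hm _ Hx). lra.
  - exists (- y0). now rewrite Ropp_involutive.
  - exists (- u). split.
    + intros y Hy. assert (- y <= u) by (apply Hu1; now rewrite Ropp_involutive). lra.
    + intros b Hb. assert (u <= - b) by (apply Hu2; intros x Hx; specialize (Hb _ Hx); lra). lra.
Qed.

Lemma Rinf_is_glb (E : R -> Prop) m :
  (exists y, E y) -> (forall y, E y -> m <= y) -> is_glb E (Rinf E).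
Proof. intros H1 H2. unfold Rinf. apply epsilon_spec. eapply glb_exists; eauto. Qed.

Lemma Rsup_is_lub (E : R -> Prop) :
  (exists y, E y) -> (exists M, forall y, E y -> y <= M) -> is_lub E (Rsup E).
Proof.
  intros H1 [M HM]. unfold Rsup. apply epsilon_spec.
  destruct (completeness E) as [u Hu]; eauto. exists M; intros x Hx; auto.
Qed.

Lemma is_lub_unique E a b : is_lub E a -> is_lub E b -> a = b.
Proof. intros [A1 A2] [B1 B2]. apply Rle_antisym; auto. Qed.

Lemma is_glb_le E l y : is_glb E l -> E y -> l <= y.
Proof. intros [H _] Hy; auto. Qed.

Lemma is_glb_approx E l e : is_glb E l -> e > 0 -> exists y, E y /\ y < l + e.
Proof.
  intros [H1 H2] He. apply NNPP; intros Hn.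
  assert (l + e <= l); [|lra].
  apply H2. intros y Hy. destruct (Rlt_or_le y (l + e)); auto.
  exfalso; apply Hn; eauto.
Qed.

(* [(a, b)] is a nonnegative combination of the [π s], [s ∈ Sg], of total
   weight [y]; [normL Sg a b] turns out to be the least such weight. *)
Definition cone_weight (Sg : list H3) (a b y : R) : Prop :=
  exists mu : nat -> R, (forall i, 0 <= mu i) /\ rsum mu (length Sg) = y /\
    a = rsum (fun i => mu i * hx (nth i Sg horigin)) (length Sg) /\
    b = rsum (fun i => mu i * hy (nth i Sg horigin)) (length Sg).

Lemma cone_weight_nonneg Sg a b y : cone_weight Sg a b y -> 0 <= y.
Proof. intros [mu [H1 [H2 _]]]. subst. apply rsum_nonneg; auto. Qed.

Lemma cone_weight_add Sg a b y a' b' y' :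
  cone_weight Sg a b y -> cone_weight Sg a' b' y' -> cone_weight Sg (a + a') (b + b') (y + y').
Proof.
  intros [mu [H1 [H2 [H3 H4]]]] [nu [G1 [G2 [G3 G4]]]].
  exists (fun i => mu i + nu i). subst. repeat split.
  - intros i; specialize (H1 i); specialize (G1 i); lra.
  - apply rsum_plus.
  - rewrite <- rsum_plus. apply rsum_ext; intros; ring.
  - rewrite <- rsum_plus. apply rsum_ext; intros; ring.
Qed.

Lemma cone_weight_scale Sg a b y c :
  0 <= c -> cone_weight Sg a b y -> cone_weight Sg (c * a) (c * b) (c * y).
Proof.
  intros Hc [mu [H1 [H2 [H3 H4]]]]. exists (fun i => c * mu i). subst. repeat split.
  - intros i; specialize (H1 i); nra.
  - apply rsum_scal.
  - rewrite <- rsum_scal. apply rsum_ext; intros; ring.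
  - rewrite <- rsum_scal. apply rsum_ext; intros; ring.
Qed.

Lemma cone_weight_0 Sg : cone_weight Sg 0 0 0.
Proof.
  exists (fun _ => 0). repeat split; intros; try lra; try apply rsum_const0;
    rewrite (rsum_ext _ (fun _ => 0)), rsum_const0; intros; ring.
Qed.

Lemma cone_weight_generator Sg s : In s Sg -> cone_weight Sg (hx s) (hy s) 1.
Proof.
  intros Hs. destruct (In_nth Sg s horigin Hs) as [j [Hj Hn]].
  exists (fun i => if Nat.eq_dec i j then 1 else 0). repeat split.
  - intros i; destruct (Nat.eq_dec i j); lra.
  - rewrite (rsum_ext _ (fun i => (if Nat.eq_dec i j then 1 else 0) * 1)) by (intros; ring).
    now rewrite rsum_indicator.
  - rewrite rsum_indicator, Hn; auto.
  - rewrite rsum_indicator, Hn; auto.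
Qed.

Lemma cone_weight_generator_scale Sg s c :
  In s Sg -> 0 <= c -> cone_weight Sg (c * hx s) (c * hy s) c.
Proof.
  intros Hs Hc. rewrite <- (Rmult_1_r c) at 3.
  apply cone_weight_scale; auto. now apply cone_weight_generator.
Qed.

Definition gauge_set (Sg : list H3) (a b t : R) : Prop :=
  0 <= t /\ exists q1 q2, inQ Sg q1 q2 /\ a = t * q1 /\ b = t * q2.

Lemma gauge_set_cone_weight Sg a b t : gauge_set Sg a b t -> cone_weight Sg a b t.
Proof.
  intros [Ht [q1 [q2 [[lam [L1 [L2 [L3 L4]]]] [Ha Hb]]]]].
  exists (fun i => t * lam i). subst. repeat split.
  - intros i; specialize (L1 i); nra.
  - rewrite rsum_scal, L2; ring.
  - rewrite <- rsum_scal. apply rsum_ext; intros; ring.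
  - rewrite <- rsum_scal. apply rsum_ext; intros; ring.
Qed.

(* A zero weight forces [(a, b) = 0], which is [0 * π s] for any [s ∈ Sg]. *)
Lemma cone_weight_gauge_set Sg a b t :
  Sg <> nil -> cone_weight Sg a b t -> gauge_set Sg a b t.
Proof.
  intros HS HT. pose proof (cone_weight_nonneg _ _ _ _ HT) as Ht.
  destruct HT as [mu [H1 [H2 [H3 H4]]]]. split; auto.
  destruct (Req_dec t 0) as [E|E].
  - assert (Z : forall i, (i < length Sg)%nat -> mu i = 0)
      by (apply rsum_nonneg_eq0; auto; lra).
    assert (Ha : a = 0) by (rewrite H3, (rsum_ext _ (fun _ => 0)), rsum_const0;
                            auto; intros i Hi; rewrite Z; auto; ring).
    assert (Hb : b = 0) by (rewrite H4, (rsum_ext _ (fun _ => 0)), rsum_const0;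
                            auto; intros i Hi; rewrite Z; auto; ring).
    destruct Sg as [|s Sg']; [congruence|].
    exists (hx s), (hy s). rewrite E, Ha, Hb. split; [|split; ring].
    destruct (cone_weight_generator (s :: Sg') s) as [nu [N1 [N2 [N3 N4]]]]; [now left|].
    now exists nu.
  - exists (a / t), (b / t). repeat split; try (field; auto).
    exists (fun i => mu i / t). repeat split; unfold Rdiv.
    + intros i; specialize (H1 i). apply Rmult_le_pos; auto.
      apply Rlt_le, Rinv_0_lt_compat; lra.
    + rewrite (rsum_ext _ (fun i => / t * mu i)) by (intros; ring).
      rewrite rsum_scal, H2. field; auto.
    + rewrite H3, Rmult_comm, <- rsum_scal. apply rsum_ext; intros; ring.
    + rewrite H4, Rmult_comm, <- rsum_scal. apply rsum_ext; intros; ring.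
Qed.

Definition gauge_is_glb (Sg : list H3) : Prop :=
  forall a b, is_glb (cone_weight Sg a b) (normL Sg a b).

Lemma normL_is_glb Sg :
  Sg <> nil -> (forall a b, exists y, cone_weight Sg a b y) -> gauge_is_glb Sg.
Proof.
  intros HS HA a b.
  assert (G : is_glb (gauge_set Sg a b) (normL Sg a b)).
  { apply Rinf_is_glb with 0.
    - destruct (HA a b) as [y Hy]. exists y. now apply cone_weight_gauge_set.
    - now intros y [Hy _]. }
  destruct G as [G1 G2]. split.
  - intros y Hy. apply G1. now apply cone_weight_gauge_set.
  - intros c Hc. apply G2. intros y Hy. apply Hc. now apply gauge_set_cone_weight.
Qed.

Section Gauge.

Variable Sg : list H3.
Hypothesis glbSg : gauge_is_glb Sg.

Lemma normL_le_weight a b y : cone_weight Sg a b y -> normL Sg a b <= y.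
Proof. apply (glbSg a b). Qed.

Lemma normL_ge a b c : (forall y, cone_weight Sg a b y -> c <= y) -> c <= normL Sg a b.
Proof. apply (glbSg a b). Qed.

Lemma normL_nonneg a b : 0 <= normL Sg a b.
Proof. apply normL_ge. apply cone_weight_nonneg. Qed.

Lemma normL_triangle a1 a2 b1 b2 :
  normL Sg (a1 + b1) (a2 + b2) <= normL Sg a1 a2 + normL Sg b1 b2.
Proof.
  apply Rnot_lt_le; intros Hlt.
  set (e := (normL Sg (a1 + b1) (a2 + b2) - (normL Sg a1 a2 + normL Sg b1 b2)) / 2).
  destruct (is_glb_approx _ _ e (glbSg a1 a2)) as [y [Hy Hy']]; [unfold e; lra|].
  destruct (is_glb_approx _ _ e (glbSg b1 b2)) as [z [Hz Hz']]; [unfold e; lra|].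
  pose proof (normL_le_weight _ _ _ (cone_weight_add _ _ _ _ _ _ _ Hy Hz)).
  unfold e in *; lra.
Qed.

Lemma normL_0 : normL Sg 0 0 = 0.
Proof.
  apply Rle_antisym; [apply normL_le_weight, cone_weight_0 | apply normL_nonneg].
Qed.

Lemma normL_scale_le c a b : 0 <= c -> normL Sg (c * a) (c * b) <= c * normL Sg a b.
Proof.
  intros Hc. destruct (Req_dec c 0) as [->|Hc0].
  - rewrite !Rmult_0_l, normL_0. lra.
  - rewrite <- (Rmult_1_l (normL Sg (c * a) (c * b))), <- (Rinv_r c), Rmult_assoc by auto.
    apply Rmult_le_compat_l; [lra|]. apply normL_ge. intros y Hy.
    apply (Rmult_le_reg_l c); [lra|]. rewrite <- Rmult_assoc, Rinv_r, Rmult_1_l by auto.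
    apply normL_le_weight. now apply cone_weight_scale.
Qed.

Lemma normL_scale c a b : 0 <= c -> normL Sg (c * a) (c * b) = c * normL Sg a b.
Proof.
  intros Hc. apply Rle_antisym; [now apply normL_scale_le|].
  destruct (Req_dec c 0) as [->|Hc0]; [rewrite Rmult_0_l; apply normL_nonneg|].
  assert (Hi : 0 < / c) by (apply Rinv_0_lt_compat; lra).
  pose proof (normL_scale_le (/ c) (c * a) (c * b) (Rlt_le _ _ Hi)) as H.
  rewrite <- !Rmult_assoc, Rinv_l, !Rmult_1_l in H by auto.
  apply (Rmult_le_reg_l (/ c)); [lra|]. rewrite <- Rmult_assoc, Rinv_l, Rmult_1_l; auto.
Qed.

Lemma normL_generator_scale s c : In s Sg -> 0 <= c -> normL Sg (c * hx s) (c * hy s) <= c.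
Proof. intros Hs Hc. now apply normL_le_weight, cone_weight_generator_scale. Qed.

Definition abs_proj (s : H3) : R := Rabs (hx s) + Rabs (hy s).

Lemma abs_proj_nonneg s : 0 <= abs_proj s.
Proof. unfold abs_proj. pose proof (Rabs_pos (hx s)); pose proof (Rabs_pos (hy s)); lra. Qed.

(* Any upper bound of [|π s|_1] over [s ∈ Sg] would do; the [+ 1] makes it positive. *)
Definition proj_bound : R := rsum (fun i => abs_proj (nth i Sg horigin)) (length Sg) + 1.

Lemma proj_bound_pos : 0 < proj_bound.
Proof.
  unfold proj_bound.
  assert (0 <= rsum (fun i => abs_proj (nth i Sg horigin)) (length Sg))
    by (apply rsum_nonneg; intros; apply abs_proj_nonneg).
  lra.
Qed.

Lemma cone_weight_abs_le a b y : cone_weight Sg a b y -> Rabs a + Rabs b <= proj_bound * y.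
Proof.
  intros [mu [H1 [H2 [H3 H4]]]]. subst.
  eapply Rle_trans; [apply Rplus_le_compat; apply Rabs_rsum_le|].
  rewrite <- rsum_plus, <- rsum_scal. apply rsum_le. intros i Hi.
  rewrite !Rabs_mult, (Rabs_right (mu i)) by (specialize (H1 i); lra).
  assert (abs_proj (nth i Sg horigin) <= proj_bound).
  { unfold proj_bound.
    pose proof (rsum_term_le (fun i => abs_proj (nth i Sg horigin)) (length Sg) i
                  (fun j => abs_proj_nonneg _) Hi). lra. }
  unfold abs_proj in *. specialize (H1 i). nra.
Qed.

Lemma normL_lower_bound a b : (Rabs a + Rabs b) / proj_bound <= normL Sg a b.
Proof.
  pose proof proj_bound_pos. apply normL_ge. intros y Hy.
  apply (Rmult_le_reg_l proj_bound); auto. unfold Rdiv.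
  rewrite Rmult_comm, Rmult_assoc, Rinv_l, Rmult_1_r by lra.
  now apply cone_weight_abs_le.
Qed.

Lemma normL_pos a b : a <> 0 \/ b <> 0 -> 0 < normL Sg a b.
Proof.
  intros Hab. pose proof proj_bound_pos. pose proof (normL_lower_bound a b).
  assert (0 < Rabs a + Rabs b).
  { pose proof (Rabs_pos a); pose proof (Rabs_pos b).
    destruct Hab as [Ha|Hb]; [pose proof (Rabs_pos_lt _ Ha)|pose proof (Rabs_pos_lt _ Hb)]; lra. }
  assert (0 < (Rabs a + Rabs b) / proj_bound) by (apply Rdiv_lt_0_compat; lra). lra.
Qed.

End Gauge.

Lemma partition_monotone a b k p :
  partition a b k p -> forall i j, (i <= j)%nat -> (j <= k)%nat -> p i <= p j.
Proof.
  intros [_ [_ H]] i j Hij Hjk. induction j as [|j IH].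
  - replace i with 0%nat by lia. lra.
  - destruct (Nat.eq_dec i (S j)) as [->|Hne]; [lra|].
    assert (p i <= p j) by (apply IH; lia). assert (p j <= p (S j)) by (apply H; lia). lra.
Qed.

Lemma partition_range a b k p : partition a b k p -> forall i, (i <= k)%nat -> a <= p i <= b.
Proof.
  intros Hp i Hi. pose proof (partition_monotone _ _ _ _ Hp) as M.
  destruct Hp as [H0 [H1 _]]. rewrite <- H0, <- H1. split; apply M; lia.
Qed.

Lemma partition_01 : partition 0 1 1 (fun i => match i with O => 0 | _ => 1 end).
Proof. repeat split; simpl; try lra. intros i Hi. replace i with 0%nat by lia. simpl; lra. Qed.

(* The central coordinate of [A⁻¹ C], i.e. how far [C] lies above the end of the
   straight horizontal segment from [A] with the same planar displacement. *)
Definition vertical_defect (A C : H3) : R :=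
  hz C - hz A - / 2 * (hx A * (hy C - hy A) - hy A * (hx C - hx A)).

Definition step_bound (A C : H3) (M u : R) : Prop :=
  Rabs (hx C - hx A) <= M * u /\ Rabs (hy C - hy A) <= M * u /\
  Rabs (hz C - hz A) <= M * u /\ Rabs (vertical_defect A C) <= M * (u * u).

Definition lipschitz_path (g : R -> H3) (M : R) : Prop :=
  0 <= M /\ forall s t, 0 <= s -> s <= t -> t <= 1 -> step_bound (g s) (g t) M (t - s).

Definition length_controlled (Sg : list H3) (g : R -> H3) (L : R) : Prop :=
  exists Lam : R -> R, Lam 1 - Lam 0 = L /\ forall s t, 0 <= s -> s <= t -> t <= 1 ->
    normL Sg (hx (g t) - hx (g s)) (hy (g t) - hy (g s)) <= Lam t - Lam s.

Definition length_attained (Sg : list H3) (g : R -> H3) (L : R) : Prop :=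
  exists k p, partition 0 1 k p /\ var_sum Sg g k p = L.

(* The quadratic bound on the vertical defect makes [g] admissible; the two
   length conditions make [L] its exact length. *)
Definition regular_path (Sg : list H3) (g : R -> H3) (L : R) : Prop :=
  (exists M, lipschitz_path g M) /\ length_controlled Sg g L /\ length_attained Sg g L.

Lemma var_sum_le_controlled Sg g L k p :
  length_controlled Sg g L -> partition 0 1 k p -> var_sum Sg g k p <= L.
Proof.
  intros [Lam [HL HLam]] Hp. pose proof (partition_range _ _ _ _ Hp) as R.
  apply Rle_trans with (rsum (fun i => Lam (p (S i)) - Lam (p i)) k).
  - apply rsum_le. intros i Hi. apply HLam.
    + apply (R i); lia.
    + destruct Hp as [_ [_ H]]; apply H; lia.
    + apply (R (S i)); lia.
  - rewrite (rsum_telescope (fun i => Lam (p i))). destruct Hp as [-> [-> _]]. lra.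
Qed.

Lemma regular_path_length Sg g L : regular_path Sg g L -> path_length Sg g = L.
Proof.
  intros [_ [Hc [k [p [Hp Hv]]]]].
  assert (Hl : is_lub (length_set Sg g) L).
  { split.
    - intros v [k' [p' [Hp' ->]]]. eapply var_sum_le_controlled; eauto.
    - intros b Hb. apply Hb. exists k, p; auto. }
  apply (is_lub_unique (length_set Sg g)); auto. apply Rsup_is_lub.
  - exists L, k, p; auto.
  - exists L. apply Hl.
Qed.

Lemma Rmult_div_succ_lt M e : 0 <= M -> e > 0 -> M * (e / (M + 1)) < e.
Proof.
  intros HM He. apply (Rmult_lt_reg_l (M + 1)); [lra|].
  replace ((M + 1) * (M * (e / (M + 1)))) with (M * e) by (field; lra). nra.
Qed.

Lemma lipschitz_continuous g M : lipschitz_path g M -> path_continuous g.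
Proof.
  intros [HM HB] t Ht e He. exists (e / (M + 1)). split; [apply Rdiv_lt_0_compat; lra|].
  intros s Hs Hst.
  assert (Hd : M * Rabs (s - t) < e).
  { apply Rle_lt_trans with (M * (e / (M + 1))); [|now apply Rmult_div_succ_lt].
    apply Rmult_le_compat_l; lra. }
  destruct (Rle_or_lt s t).
  - destruct (HB s t) as [A [B [C _]]]; try lra.
    rewrite Rabs_minus_sym, Rabs_right in Hd by lra.
    rewrite (Rabs_minus_sym (hx (g s))), (Rabs_minus_sym (hy (g s))),
            (Rabs_minus_sym (hz (g s))). repeat split; lra.
  - destruct (HB t s) as [A [B [C _]]]; try lra.
    rewrite Rabs_right in Hd by lra. repeat split; lra.
Qed.

(* The area-sum error along a partition is the sum of the vertical defects of
   its steps, each quadratic in the mesh. *)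
Lemma lipschitz_area_error g M t k p :
  lipschitz_path g M -> partition 0 t k p -> t <= 1 ->
  Rabs (hz (g t) - hz (g 0) - area_sum g k p) <=
    rsum (fun i => M * ((p (S i) - p i) * (p (S i) - p i))) k.
Proof.
  intros [HM HB] Hp Ht. pose proof (partition_range _ _ _ _ Hp) as R.
  replace (hz (g t) - hz (g 0) - area_sum g k p)
    with (rsum (fun i => vertical_defect (g (p i)) (g (p (S i)))) k).
  - eapply Rle_trans; [apply Rabs_rsum_le|]. apply rsum_le. intros i Hi.
    assert (p i <= p (S i)) by (destruct Hp as [_ [_ H]]; apply H; lia).
    pose proof (R i ltac:(lia)). pose proof (R (S i) ltac:(lia)).
    apply (HB (p i) (p (S i))); lra.
  - unfold vertical_defect, area_sum. rewrite rsum_minus.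
    rewrite (rsum_telescope (fun i => hz (g (p i)))). destruct Hp as [-> [-> _]]. ring.
Qed.

Lemma lipschitz_area g M : lipschitz_path g M ->
  forall t, 0 <= t <= 1 -> forall e, e > 0 -> exists d, d > 0 /\
    forall k p, partition 0 t k p -> mesh_lt k p d ->
      Rabs (hz (g t) - hz (g 0) - area_sum g k p) < e.
Proof.
  intros Hg t Ht e He. pose proof (proj1 Hg) as HM.
  set (d := e / (M + 1)). exists d. split; [apply Rdiv_lt_0_compat; lra|].
  intros k p Hp Hm. eapply Rle_lt_trans; [apply (lipschitz_area_error g M); auto; lra|].
  apply Rle_lt_trans with (rsum (fun i => M * d * (p (S i) - p i)) k).
  - apply rsum_le. intros i Hi. specialize (Hm i Hi).
    assert (p i <= p (S i)) by (destruct Hp as [_ [_ H]]; apply H; lia).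
    rewrite Rmult_assoc. apply Rmult_le_compat_l; [lra|]. apply Rmult_le_compat_r; lra.
  - rewrite rsum_scal, (rsum_telescope p). destruct Hp as [-> [-> _]].
    pose proof (Rmult_div_succ_lt M e HM He). fold d in H.
    assert (0 <= M * d) by (apply Rmult_le_pos; unfold d; [|apply Rlt_le, Rdiv_lt_0_compat]; lra).
    nra.
Qed.

Lemma regular_admissible Sg g L : regular_path Sg g L -> admissible Sg g.
Proof.
  intros [[M HM] [Hc _]]. split; [|split].
  - eapply lipschitz_continuous; eauto.
  - exists L. intros v [k [p [Hp ->]]]. eapply var_sum_le_controlled; eauto.
  - eapply lipschitz_area; eauto.
Qed.

Lemma step_bound_mono A C M M' u :
  M <= M' -> 0 <= u -> step_bound A C M u -> step_bound A C M' u.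
Proof.
  intros HM Hu [X [Y [Z D]]].
  assert (M * u <= M' * u) by (apply Rmult_le_compat_r; lra).
  assert (M * (u * u) <= M' * (u * u)) by (apply Rmult_le_compat_r; nra).
  repeat split; lra.
Qed.

Lemma step_bound_double A C M u :
  0 <= M -> 0 <= u -> step_bound A C M (2 * u) -> step_bound A C (4 * M) u.
Proof. intros HM Hu [X [Y [Z D]]]. repeat split; nra. Qed.

Lemma vertical_defect_chain A B C :
  vertical_defect A C = vertical_defect A B + vertical_defect B C +
    / 2 * ((hx B - hx A) * (hy C - hy B) - (hy B - hy A) * (hx C - hx B)).
Proof. unfold vertical_defect. ring. Qed.

Lemma Rabs_sub_chain_le a b c p q : Rabs (b - a) <= p -> Rabs (c - b) <= q -> Rabs (c - a) <= p + q.
Proof.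
  intros H1 H2. replace (c - a) with ((c - b) + (b - a)) by ring.
  pose proof (Rabs_triang (c - b) (b - a)). lra.
Qed.

(* The cross term of [vertical_defect_chain] is a product of two first-order
   increments, hence of the order of [u v]. *)
Lemma step_bound_chain A B C M1 M2 u v :
  0 <= M1 -> 0 <= M2 -> 0 <= u -> 0 <= v ->
  step_bound A B M1 u -> step_bound B C M2 v ->
  step_bound A C (M1 + M2 + M1 * M2) (u + v).
Proof.
  intros H1 H2 Hu Hv [X1 [Y1 [Z1 E1]]] [X2 [Y2 [Z2 E2]]].
  assert (Hw : forall a b c, Rabs (b - a) <= M1 * u -> Rabs (c - b) <= M2 * v ->
                 Rabs (c - a) <= (M1 + M2 + M1 * M2) * (u + v)).
  { intros a b c Ha Hb. pose proof (Rabs_sub_chain_le _ _ _ _ _ Ha Hb).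
    assert (0 <= M1 * M2 * (u + v)) by (apply Rmult_le_pos; [apply Rmult_le_pos|]; lra).
    nra. }
  split; [|split; [|split]];
    [apply (Hw _ (hx B))|apply (Hw _ (hy B))|apply (Hw _ (hz B))|]; auto.
  rewrite (vertical_defect_chain A B C).
  set (cr := (hx B - hx A) * (hy C - hy B) - (hy B - hy A) * (hx C - hx B)).
  assert (Hcr : Rabs cr <= 2 * (M1 * u * (M2 * v))).
  { unfold cr. eapply Rle_trans; [apply Rabs_triang|]. rewrite Rabs_Ropp, !Rabs_mult.
    assert (Rabs (hx B - hx A) * Rabs (hy C - hy B) <= M1 * u * (M2 * v))
      by (apply Rmult_le_compat; auto; apply Rabs_pos).
    assert (Rabs (hy B - hy A) * Rabs (hx C - hx B) <= M1 * u * (M2 * v))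
      by (apply Rmult_le_compat; auto; apply Rabs_pos).
    lra. }
  pose proof (Rabs_triang (vertical_defect A B + vertical_defect B C) (/ 2 * cr)).
  pose proof (Rabs_triang (vertical_defect A B) (vertical_defect B C)).
  rewrite Rabs_mult, (Rabs_right (/ 2)) in * by lra.
  assert (M1 * (u * u) <= M1 * ((u + v) * (u + v))) by (apply Rmult_le_compat_l; nra).
  assert (M2 * (v * v) <= M2 * ((u + v) * (u + v))) by (apply Rmult_le_compat_l; nra).
  assert (M1 * M2 * (u * v) <= M1 * M2 * ((u + v) * (u + v)))
    by (apply Rmult_le_compat_l; [apply Rmult_le_pos|]; nra).
  nra.
Qed.

Definition const_path (P : H3) : R -> H3 := fun _ => P.

Definition segment (P : H3) (a b : R) : R -> H3 := fun t => hmul P (mkH (t * a) (t * b) 0).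

Lemma regular_const_path Sg P : gauge_is_glb Sg -> regular_path Sg (const_path P) 0.
Proof.
  intros glbSg. unfold const_path. repeat split.
  - exists 0. split; [lra|]. intros s t _ _ _.
    unfold step_bound, vertical_defect. rewrite !Rminus_diag.
    replace (0 - / 2 * (hx P * 0 - hy P * 0)) with 0 by ring.
    rewrite Rabs_R0. repeat split; lra.
  - exists (fun _ => 0). split; [lra|]. intros. rewrite !Rminus_diag, normL_0; auto. lra.
  - exists 1%nat, (fun i => match i with O => 0 | _ => 1 end). split; [apply partition_01|].
    unfold var_sum; simpl. rewrite !Rminus_diag, normL_0; auto. lra.
Qed.

Lemma segment_increment P a b s t :
  hx (segment P a b t) - hx (segment P a b s) = (t - s) * a /\
  hy (segment P a b t) - hy (segment P a b s) = (t - s) * b /\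
  hz (segment P a b t) - hz (segment P a b s) = (t - s) * (/ 2 * (hx P * b - hy P * a)) /\
  vertical_defect (segment P a b s) (segment P a b t) = 0.
Proof. unfold segment, vertical_defect, hmul; simpl. repeat split; ring. Qed.

Lemma regular_segment Sg P a b : gauge_is_glb Sg -> regular_path Sg (segment P a b) (normL Sg a b).
Proof.
  intros glbSg. repeat split.
  - exists (Rabs a + Rabs b + Rabs (/ 2 * (hx P * b - hy P * a))).
    pose proof (Rabs_pos a); pose proof (Rabs_pos b);
      pose proof (Rabs_pos (/ 2 * (hx P * b - hy P * a))).
    split; [lra|]. intros s t Hs Hst Ht.
    destruct (segment_increment P a b s t) as [X [Y [Z D]]]. unfold step_bound.
    rewrite X, Y, Z, D, Rabs_R0, !(Rabs_mult (t - s)), (Rabs_right (t - s)) by lra.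
    set (c := Rabs (/ 2 * (hx P * b - hy P * a))) in *.
    assert (0 <= t - s) by lra. clear X Y Z D. repeat split; [nra|nra|nra|apply Rmult_le_pos; nra].
  - exists (fun t => t * normL Sg a b). split; [ring|]. intros s t _ Hst _.
    destruct (segment_increment P a b s t) as [-> [-> _]].
    rewrite normL_scale by (auto; lra). apply Req_le; ring.
  - exists 1%nat, (fun i => match i with O => 0 | _ => 1 end). split; [apply partition_01|].
    unfold var_sum, segment; simpl. rewrite Rplus_0_l. f_equal; ring.
Qed.

Section Concatenation.

Variables g1 g2 : R -> H3.
Hypothesis junction : g1 1 = g2 0.

Definition concat : R -> H3 :=
  fun t => if Rle_dec t (/ 2) then g1 (2 * t) else g2 (2 * t - 1).

Lemma concat_left t : t <= / 2 -> concat t = g1 (2 * t).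
Proof. intros H. unfold concat. destruct (Rle_dec t (/ 2)); [auto|lra]. Qed.

Lemma concat_right t : / 2 <= t -> concat t = g2 (2 * t - 1).
Proof.
  intros H. unfold concat. destruct (Rle_dec t (/ 2)); [|auto].
  replace (2 * t - 1) with 0 by lra. replace (2 * t) with 1 by lra. exact junction.
Qed.

Lemma concat_0 : concat 0 = g1 0.
Proof. rewrite concat_left by lra. f_equal; ring. Qed.

Lemma concat_1 : concat 1 = g2 1.
Proof. rewrite concat_right by lra. f_equal; ring. Qed.

Lemma lipschitz_concat M1 M2 :
  lipschitz_path g1 M1 -> lipschitz_path g2 M2 -> lipschitz_path concat (4 * (M1 + M2 + M1 * M2)).
Proof.
  intros [HM1 B1] [HM2 B2].
  assert (0 <= M1 * M2) by (apply Rmult_le_pos; auto).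
  split; [lra|]. intros s t Hs Hst Ht.
  apply step_bound_double; [lra|lra|].
  destruct (Rle_dec t (/ 2)); [|destruct (Rle_dec (/ 2) s)].
  - rewrite concat_left, concat_left by lra.
    apply step_bound_mono with M1; [lra|lra|].
    replace (2 * (t - s)) with (2 * t - 2 * s) by ring. apply B1; lra.
  - rewrite concat_right, concat_right by lra.
    apply step_bound_mono with M2; [lra|lra|].
    replace (2 * (t - s)) with ((2 * t - 1) - (2 * s - 1)) by ring. apply B2; lra.
  - rewrite concat_left, concat_right by lra.
    replace (2 * (t - s)) with ((1 - 2 * s) + (2 * t - 1 - 0)) by ring.
    apply step_bound_chain with (g1 1); try lra.
    + apply B1; lra.
    + rewrite junction. apply B2; lra.
Qed.

Lemma length_controlled_concat Sg L1 L2 : gauge_is_glb Sg ->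
  length_controlled Sg g1 L1 -> length_controlled Sg g2 L2 ->
  length_controlled Sg concat (L1 + L2).
Proof.
  intros glbSg [La1 [E1 H1]] [La2 [E2 H2]].
  exists (fun t => if Rle_dec t (/ 2) then La1 (2 * t) - La1 0
                   else L1 + (La2 (2 * t - 1) - La2 0)).
  split.
  - destruct (Rle_dec 1 (/ 2)); [lra|]. destruct (Rle_dec 0 (/ 2)); [|lra].
    replace (2 * 1 - 1) with 1 by ring. replace (2 * 0) with 0 by ring. lra.
  - intros s t Hs Hst Ht.
    destruct (Rle_dec t (/ 2)); destruct (Rle_dec s (/ 2)); try lra.
    + rewrite concat_left, concat_left by lra. assert (H := H1 (2 * s) (2 * t)). lra.
    + rewrite concat_right, concat_left by lra.
      replace (hx (g2 (2 * t - 1)) - hx (g1 (2 * s)))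
        with ((hx (g2 (2 * t - 1)) - hx (g2 0)) + (hx (g1 1) - hx (g1 (2 * s))))
        by (rewrite junction; ring).
      replace (hy (g2 (2 * t - 1)) - hy (g1 (2 * s)))
        with ((hy (g2 (2 * t - 1)) - hy (g2 0)) + (hy (g1 1) - hy (g1 (2 * s))))
        by (rewrite junction; ring).
      eapply Rle_trans; [apply normL_triangle; auto|].
      assert (H := H2 0 (2 * t - 1)). assert (H' := H1 (2 * s) 1). lra.
    + rewrite concat_right, concat_right by lra. assert (H := H2 (2 * s - 1) (2 * t - 1)). lra.
Qed.

Definition concat_partition (k1 : nat) (p1 p2 : nat -> R) (i : nat) : R :=
  if le_lt_dec i k1 then p1 i / 2 else (1 + p2 (i - k1)%nat) / 2.

Lemma length_attained_concat Sg L1 L2 :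
  length_attained Sg g1 L1 -> length_attained Sg g2 L2 -> length_attained Sg concat (L1 + L2).
Proof.
  intros [k1 [p1 [Hp1 Hv1]]] [k2 [p2 [Hp2 Hv2]]].
  pose proof (partition_range _ _ _ _ Hp1) as R1. pose proof (partition_range _ _ _ _ Hp2) as R2.
  set (p := concat_partition k1 p1 p2).
  assert (Pl : forall i, (i <= k1)%nat -> p i = p1 i / 2).
  { intros i Hi. unfold p, concat_partition. destruct (le_lt_dec i k1); auto; lia. }
  assert (Pr : forall i, (k1 <= i)%nat -> p i = (1 + p2 (i - k1)%nat) / 2).
  { intros i Hi. unfold p, concat_partition. destruct (le_lt_dec i k1); auto.
    replace i with k1 by lia. rewrite Nat.sub_diag.
    destruct Hp1 as [_ [-> _]], Hp2 as [-> _]. field. }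
  assert (Gl : forall i, (i <= k1)%nat -> concat (p i) = g1 (p1 i)).
  { intros i Hi. rewrite Pl by auto. specialize (R1 i Hi).
    rewrite concat_left by lra. f_equal; field. }
  assert (Gr : forall i, (k1 <= i)%nat -> (i - k1 <= k2)%nat ->
                 concat (p i) = g2 (p2 (i - k1)%nat)).
  { intros i Hi Hi2. rewrite Pr by auto. specialize (R2 _ Hi2).
    rewrite concat_right by lra. f_equal; field. }
  exists (k1 + k2)%nat, p. split; [split; [|split]|].
  - rewrite Pl by lia. destruct Hp1 as [-> _]. field.
  - rewrite Pr by lia. replace (k1 + k2 - k1)%nat with k2 by lia. destruct Hp2 as [_ [-> _]]. field.
  - intros i Hi. destruct (le_lt_dec (S i) k1).
    + rewrite !Pl by lia. destruct Hp1 as [_ [_ M]]. specialize (M i ltac:(lia)). lra.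
    + rewrite !Pr by lia. replace (S i - k1)%nat with (S (i - k1)) by lia.
      destruct Hp2 as [_ [_ M]]. specialize (M (i - k1)%nat ltac:(lia)). lra.
  - unfold var_sum. rewrite rsum_app, <- Hv1, <- Hv2. f_equal.
    + apply rsum_ext. intros i Hi. rewrite !Gl by lia. auto.
    + apply rsum_ext. intros j Hj. rewrite !Gr by lia.
      replace (S (k1 + j) - k1)%nat with (S j) by lia.
      replace (k1 + j - k1)%nat with j by lia. auto.
Qed.

Lemma regular_concat Sg L1 L2 : gauge_is_glb Sg ->
  regular_path Sg g1 L1 -> regular_path Sg g2 L2 -> regular_path Sg concat (L1 + L2).
Proof.
  intros glbSg [[M1 HM1] [C1 A1]] [[M2 HM2] [C2 A2]]. split; [|split].
  - exists (4 * (M1 + M2 + M1 * M2)). now apply lipschitz_concat.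
  - now apply length_controlled_concat.
  - now apply length_attained_concat.
Qed.

Definition on_path (g : R -> H3) (y : H3) : Prop := exists t, 0 <= t <= 1 /\ g t = y.

Lemma on_path_concat_r y : on_path g2 y -> on_path concat y.
Proof.
  intros [t [Ht E]]. exists ((1 + t) / 2). split; [lra|].
  rewrite concat_right by lra. rewrite <- E. f_equal; field.
Qed.

End Concatenation.

Lemma H3_ext (a b : H3) : hx a = hx b -> hy a = hy b -> hz a = hz b -> a = b.
Proof. destruct a, b; simpl; intros; subst; auto. Qed.

Lemma hmul_assoc a b c : hmul (hmul a b) c = hmul a (hmul b c).
Proof. apply H3_ext; unfold hmul; simpl; ring. Qed.

Lemma hmul_0_r a : hmul a horigin = a.
Proof. apply H3_ext; unfold hmul, horigin; simpl; ring. Qed.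

Lemma hmul_0_l a : hmul horigin a = a.
Proof. apply H3_ext; unfold hmul, horigin; simpl; ring. Qed.

Definition hvec (v : R * R) : H3 := mkH (fst v) (snd v) 0.

Definition hvec_prod (vs : list (R * R)) : H3 :=
  fold_right (fun v acc => hmul (hvec v) acc) horigin vs.

Fixpoint polygon (P : H3) (vs : list (R * R)) : R -> H3 :=
  match vs with
  | nil => const_path P
  | v :: vs' => concat (segment P (fst v) (snd v)) (polygon (hmul P (hvec v)) vs')
  end.

Definition polygon_length (Sg : list H3) (vs : list (R * R)) : R :=
  fold_right (fun v acc => normL Sg (fst v) (snd v) + acc) 0 vs.

Lemma hvec_prod_app vs ws : hvec_prod (vs ++ ws) = hmul (hvec_prod vs) (hvec_prod ws).
Proof.
  induction vs as [|v vs IH]; simpl; [now rewrite hmul_0_l|]. now rewrite IH, hmul_assoc.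
Qed.

Lemma polygon_length_app Sg vs ws :
  polygon_length Sg (vs ++ ws) = polygon_length Sg vs + polygon_length Sg ws.
Proof. induction vs as [|v vs IH]; simpl; lra. Qed.

Lemma polygon_0 P vs : polygon P vs 0 = P.
Proof.
  destruct vs as [|v vs]; [reflexivity|]. simpl. rewrite concat_0.
  apply H3_ext; unfold segment, hmul; simpl; ring.
Qed.

Lemma polygon_junction P v vs : segment P (fst v) (snd v) 1 = polygon (hmul P (hvec v)) vs 0.
Proof. rewrite polygon_0. apply H3_ext; unfold segment, hmul, hvec; simpl; ring. Qed.

Lemma polygon_1 P vs : polygon P vs 1 = hmul P (hvec_prod vs).
Proof.
  revert P; induction vs as [|v vs IH]; intros P; simpl.
  - now rewrite hmul_0_r.
  - rewrite concat_1 by apply polygon_junction. now rewrite IH, hmul_assoc.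
Qed.

Lemma regular_polygon Sg P vs :
  gauge_is_glb Sg -> regular_path Sg (polygon P vs) (polygon_length Sg vs).
Proof.
  intros glbSg. revert P; induction vs as [|v vs IH]; intros P; simpl.
  - now apply regular_const_path.
  - apply regular_concat; auto; [apply polygon_junction|now apply regular_segment].
Qed.

Lemma polygon_admissible Sg P vs : gauge_is_glb Sg -> admissible Sg (polygon P vs).
Proof. intros glbSg. eapply regular_admissible. now apply regular_polygon. Qed.

Lemma path_length_polygon Sg P vs :
  gauge_is_glb Sg -> path_length Sg (polygon P vs) = polygon_length Sg vs.
Proof. intros glbSg. apply regular_path_length. now apply regular_polygon. Qed.

Lemma polygon_vertex P vs i :
  (i <= length vs)%nat -> on_path (polygon P vs) (hmul P (hvec_prod (firstn i vs))).
Proof.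
  revert P i; induction vs as [|v vs IH]; intros P i Hi.
  - simpl in Hi. replace i with 0%nat by lia. exists 0. split; [lra|].
    simpl. now rewrite hmul_0_r.
  - destruct i as [|i].
    + exists 0. split; [lra|]. rewrite polygon_0. simpl. now rewrite hmul_0_r.
    + simpl. rewrite <- hmul_assoc. apply on_path_concat_r; [apply polygon_junction|].
      apply IH. simpl in Hi; lia.
Qed.

Definition cross (a b : H3) : R := hx a * hy b - hy a * hx b.

Lemma cross_hmul_l a b c : cross (hmul a b) c = cross a c + cross b c.
Proof. unfold cross, hmul; simpl; ring. Qed.

Lemma cross_hmul_r a b c : cross a (hmul b c) = cross a b + cross a c.
Proof. unfold cross, hmul; simpl; ring. Qed.

Lemma cross_wprod_eq0 (Sg : list H3) :
  (forall s1 s2, In s1 Sg -> In s2 Sg -> cross s1 s2 = 0) ->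
  forall w1 w2, (forall s, In s w1 -> In s Sg) -> (forall s, In s w2 -> In s Sg) ->
  cross (wprod w1) (wprod w2) = 0.
Proof.
  intros H w1 w2 H1 H2.
  assert (Hl : forall t, In t Sg -> cross (wprod w1) t = 0).
  { intros t Ht. clear H2. induction w1 as [|s w1 IH]; simpl.
    - unfold cross, horigin; simpl; ring.
    - rewrite cross_hmul_l, H, IH; auto with datatypes; ring. }
  induction w2 as [|s w2 IH]; simpl.
  - unfold cross, horigin; simpl; ring.
  - rewrite cross_hmul_r, Hl, IH; auto with datatypes; ring.
Qed.

Lemma generates_cross_pos Sg : generates Sg ->
  exists s1 s2, In s1 Sg /\ In s2 Sg /\ cross s1 s2 > 0.
Proof.
  intros Hg. apply NNPP; intros Hn.
  assert (H : forall s1 s2, In s1 Sg -> In s2 Sg -> cross s1 s2 = 0).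
  { intros s1 s2 H1 H2. destruct (Rtotal_order (cross s1 s2) 0) as [L|[E|G]]; auto;
      exfalso; apply Hn; [exists s2, s1|exists s1, s2]; repeat split; auto.
    unfold cross in *; lra. }
  destruct (Hg (mkH 1 0 0)) as [w1 [W1 E1]]; [exists 1%Z, 0%Z, 0%Z; simpl; repeat split; lra|].
  destruct (Hg (mkH 0 1 0)) as [w2 [W2 E2]]; [exists 0%Z, 1%Z, 0%Z; simpl; repeat split; lra|].
  pose proof (cross_wprod_eq0 Sg H w1 w2 W1 W2) as C.
  rewrite E1, E2 in C. unfold cross in C; simpl in C. lra.
Qed.

Lemma cone_weight_line Sg s c :
  In s Sg -> In (hinv s) Sg -> exists y, cone_weight Sg (c * hx s) (c * hy s) y.
Proof.
  intros H1 H2. destruct (Rle_or_lt 0 c) as [Hc|Hc].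
  - exists c. now apply cone_weight_generator_scale.
  - exists (- c). replace c with (- c * -1) at 1 2 by ring.
    rewrite !Rmult_assoc. replace (-1 * hx s) with (hx (hinv s)) by (simpl; ring).
    replace (-1 * hy s) with (hy (hinv s)) by (simpl; ring).
    apply cone_weight_generator_scale; auto; lra.
Qed.

(* Cramer's rule writes [(a, b)] in the basis [π s1, π s2]. *)
Lemma cone_weight_exists Sg s1 s2 :
  In s1 Sg -> In s2 Sg -> In (hinv s1) Sg -> In (hinv s2) Sg -> cross s1 s2 > 0 ->
  forall a b, exists y, cone_weight Sg a b y.
Proof.
  intros H1 H2 H3 H4 Hk a b.
  set (k := cross s1 s2) in *.
  destruct (cone_weight_line Sg s1 ((a * hy s2 - b * hx s2) / k) H1 H3) as [y1 Y1].
  destruct (cone_weight_line Sg s2 ((hx s1 * b - hy s1 * a) / k) H2 H4) as [y2 Y2].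
  exists (y1 + y2). pose proof (cone_weight_add _ _ _ _ _ _ _ Y1 Y2) as Y.
  assert (Ea : (a * hy s2 - b * hx s2) / k * hx s1 + (hx s1 * b - hy s1 * a) / k * hx s2 = a)
    by (unfold k, cross in *; field; lra).
  assert (Eb : (a * hy s2 - b * hx s2) / k * hy s1 + (hx s1 * b - hy s1 * a) / k * hy s2 = b)
    by (unfold k, cross in *; field; lra).
  now rewrite Ea, Eb in Y.
Qed.

Lemma spanning_gauge_is_glb Sg s1 s2 :
  In s1 Sg -> In s2 Sg -> In (hinv s1) Sg -> In (hinv s2) Sg -> cross s1 s2 > 0 ->
  gauge_is_glb Sg.
Proof.
  intros H1 H2 H3 H4 Hk. apply normL_is_glb.
  - intros E. rewrite E in H1. contradiction.
  - now apply (cone_weight_exists Sg s1 s2).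
Qed.

Definition cc_connected (Sg : list H3) : Prop :=
  forall p q, exists g, admissible Sg g /\ g 0 = p /\ g 1 = q.

Section CCDistance.

Variable Sg : list H3.
Hypothesis glbSg : gauge_is_glb Sg.
Hypothesis connSg : cc_connected Sg.

Lemma path_length_nonneg g : admissible Sg g -> 0 <= path_length Sg g.
Proof.
  intros [_ [[M HM] _]]. unfold path_length.
  set (p := fun i : nat => match i with O => 0 | _ => 1 end).
  assert (Hv : length_set Sg g (var_sum Sg g 1 p))
    by (exists 1%nat, p; split; auto; apply partition_01).
  destruct (Rsup_is_lub _ (ex_intro _ _ Hv) (ex_intro _ M HM)) as [Hub _].
  eapply Rle_trans; [|exact (Hub _ Hv)].
  unfold var_sum; simpl. rewrite Rplus_0_l. now apply normL_nonneg.
Qed.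

Lemma dCC_is_glb p q :
  is_glb (fun l => exists g, admissible Sg g /\ g 0 = p /\ g 1 = q /\ l = path_length Sg g)
         (dCC Sg p q).
Proof.
  apply Rinf_is_glb with 0.
  - destruct (connSg p q) as [g [A [B C]]]. exists (path_length Sg g), g; auto.
  - intros y [g [A [_ [_ ->]]]]. now apply path_length_nonneg.
Qed.

Lemma dCC_le_path_length p q g :
  admissible Sg g -> g 0 = p -> g 1 = q -> dCC Sg p q <= path_length Sg g.
Proof. intros A B C. apply (is_glb_le _ _ _ (dCC_is_glb p q)). exists g; auto. Qed.

Lemma dCC_nonneg p q : 0 <= dCC Sg p q.
Proof.
  apply (dCC_is_glb p q). intros y [g [A [_ [_ ->]]]]. now apply path_length_nonneg.
Qed.

Lemma dist_to_path_le x g y : on_path g y -> dist_to_path Sg x g <= dCC Sg x y.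
Proof.
  intros [t [Ht <-]].
  set (E := fun d => exists t, 0 <= t <= 1 /\ d = dCC Sg x (g t)).
  apply (is_glb_le E); [|now exists t].
  apply Rinf_is_glb with 0.
  - exists (dCC Sg x (g t)), t; auto.
  - intros d [t' [_ ->]]. apply dCC_nonneg.
Qed.

End CCDistance.

Definition proj (s : H3) : R * R := (hx s, hy s).

Definition zsum (w : list H3) : R := fold_right (fun s a => hz s + a) 0 w.

Lemma wprod_split w : wprod w = hmul (hvec_prod (map proj w)) (mkH 0 0 (zsum w)).
Proof.
  induction w as [|s w IH]; simpl.
  - apply H3_ext; unfold hmul, horigin; simpl; ring.
  - rewrite IH. apply H3_ext; unfold hmul, hvec, proj; simpl; ring.
Qed.

Definition zmax (Sg : list H3) : R := fold_right (fun s a => Rabs (hz s) + a) 0 Sg.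

Lemma zmax_nonneg Sg : 0 <= zmax Sg.
Proof. induction Sg as [|s Sg IH]; simpl; [lra|]. pose proof (Rabs_pos (hz s)); lra. Qed.

Lemma Rabs_hz_le_zmax Sg s : In s Sg -> Rabs (hz s) <= zmax Sg.
Proof.
  induction Sg as [|a Sg IH]; simpl; [tauto|]. intros [<-|H].
  - pose proof (zmax_nonneg Sg); lra.
  - pose proof (IH H); pose proof (Rabs_pos (hz a)); lra.
Qed.

Lemma zsum_bound Sg w :
  (forall s, In s w -> In s Sg) -> Rabs (zsum w) <= INR (length w) * zmax Sg.
Proof.
  induction w as [|s w IH]; intros H.
  - simpl. rewrite Rabs_R0; lra.
  - change (length (s :: w)) with (S (length w)). rewrite S_INR. simpl zsum.
    pose proof (Rabs_triang (hz s) (zsum w)).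
    pose proof (Rabs_hz_le_zmax Sg s (H s (or_introl eq_refl))).
    assert (Rabs (zsum w) <= INR (length w) * zmax Sg) by (apply IH; auto with datatypes).
    lra.
Qed.

Lemma polygon_length_word Sg w : gauge_is_glb Sg -> (forall s, In s w -> In s Sg) ->
  polygon_length Sg (map proj w) <= INR (length w).
Proof.
  intros glbSg. induction w as [|s w IH]; intros H; [simpl; lra|].
  change (length (s :: w)) with (S (length w)). rewrite S_INR.
  pose proof (normL_generator_scale Sg glbSg s 1 (H s (or_introl eq_refl)) ltac:(lra)) as Hs.
  rewrite !Rmult_1_l in Hs.
  assert (polygon_length Sg (map proj w) <= INR (length w)) by (apply IH; auto with datatypes).
  change (normL Sg (hx s) (hy s) + polygon_length Sg (map proj w) <= INR (length w) + 1). lra.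
Qed.

Definition commutator_loop (c : R) (a b : H3) : list (R * R) :=
  (c * hx a, c * hy a) :: (c * hx b, c * hy b) ::
  (c * hx (hinv a), c * hy (hinv a)) :: (c * hx (hinv b), c * hy (hinv b)) :: nil.

Lemma hvec_prod_commutator_loop c a b :
  hvec_prod (commutator_loop c a b) = mkH 0 0 (c * c * cross a b).
Proof.
  apply H3_ext; unfold hvec_prod, commutator_loop, hvec, hmul, hinv, horigin, cross; simpl; field.
Qed.

Lemma polygon_length_commutator_loop Sg c a b : gauge_is_glb Sg -> 0 <= c ->
  In a Sg -> In b Sg -> In (hinv a) Sg -> In (hinv b) Sg ->
  0 <= polygon_length Sg (commutator_loop c a b) <= 4 * c.
Proof.
  intros glbSg Hc Ha Hb Ha' Hb'. unfold polygon_length, commutator_loop; cbn [fold_right fst snd].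
  pose proof (normL_generator_scale Sg glbSg _ _ Ha Hc).
  pose proof (normL_generator_scale Sg glbSg _ _ Hb Hc).
  pose proof (normL_generator_scale Sg glbSg _ _ Ha' Hc).
  pose proof (normL_generator_scale Sg glbSg _ _ Hb' Hc).
  pose proof (normL_nonneg Sg glbSg (c * hx a) (c * hy a)).
  pose proof (normL_nonneg Sg glbSg (c * hx b) (c * hy b)).
  pose proof (normL_nonneg Sg glbSg (c * hx (hinv a)) (c * hy (hinv a))).
  pose proof (normL_nonneg Sg glbSg (c * hx (hinv b)) (c * hy (hinv b))).
  lra.
Qed.

Section Tracking.

Variables (Sg : list H3) (s1 s2 : H3).
Hypotheses (Hs1 : In s1 Sg) (Hs2 : In s2 Sg) (Hs1' : In (hinv s1) Sg) (Hs2' : In (hinv s2) Sg).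
Hypothesis cross_pos : cross s1 s2 > 0.

Let glbSg : gauge_is_glb Sg := spanning_gauge_is_glb Sg s1 s2 Hs1 Hs2 Hs1' Hs2' cross_pos.

(* The side [c] is chosen so that [c² cross s1 s2 = |D|]; swapping [s1] and [s2]
   flips the sign. *)
Definition central_loop (D : R) : list (R * R) :=
  let c := sqrt (Rabs D / cross s1 s2) in
  if Rle_dec 0 D then commutator_loop c s1 s2 else commutator_loop c s2 s1.

Lemma hvec_prod_central_loop D : hvec_prod (central_loop D) = mkH 0 0 D.
Proof.
  unfold central_loop.
  assert (Hs : sqrt (Rabs D / cross s1 s2) * sqrt (Rabs D / cross s1 s2) = Rabs D / cross s1 s2)
    by (apply sqrt_sqrt, Rle_mult_inv_pos; [apply Rabs_pos|lra]).
  destruct (Rle_dec 0 D); rewrite hvec_prod_commutator_loop, Hs; f_equal.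
  - rewrite Rabs_right by lra. field. lra.
  - rewrite Rabs_left by lra. replace (cross s2 s1) with (- cross s1 s2) by (unfold cross; ring).
    field. lra.
Qed.

Lemma polygon_length_central_loop D :
  0 <= polygon_length Sg (central_loop D) <= 4 * sqrt (Rabs D / cross s1 s2).
Proof.
  unfold central_loop.
  destruct (Rle_dec 0 D); apply polygon_length_commutator_loop; auto; apply sqrt_pos.
Qed.

Lemma spanning_cc_connected : cc_connected Sg.
Proof.
  intros p q. set (v := (hx q - hx p, hy q - hy p)).
  exists (polygon p (v :: central_loop (hz q - hz (hmul p (hvec v))))). split; [|split].
  - now apply polygon_admissible.
  - apply polygon_0.
  - rewrite polygon_1. simpl. rewrite hvec_prod_central_loop.
    apply H3_ext; unfold hmul, hvec, v; simpl; ring.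
Qed.

Lemma dCC_central_le P D : dCC Sg P (hmul P (mkH 0 0 D)) <= 4 * sqrt (Rabs D / cross s1 s2).
Proof.
  eapply Rle_trans.
  - apply (dCC_le_path_length Sg glbSg spanning_cc_connected _ _ (polygon P (central_loop D))).
    + now apply polygon_admissible.
    + apply polygon_0.
    + now rewrite polygon_1, hvec_prod_central_loop.
  - rewrite path_length_polygon by auto. apply polygon_length_central_loop.
Qed.

Definition backtrack (c : R) : list (R * R) :=
  (c * hx s1, c * hy s1) :: (c * hx (hinv s1), c * hy (hinv s1)) :: nil.

Definition backtrack_unit : R := normL Sg (hx s1) (hy s1) + normL Sg (hx (hinv s1)) (hy (hinv s1)).

Lemma backtrack_unit_pos : 0 < backtrack_unit.
Proof.
  unfold backtrack_unit. pose proof (normL_nonneg Sg glbSg (hx (hinv s1)) (hy (hinv s1))).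
  assert (0 < normL Sg (hx s1) (hy s1)); [|lra].
  apply normL_pos; auto. pose proof cross_pos as Hk. unfold cross in Hk.
  destruct (Req_dec (hx s1) 0) as [E|E]; [right|now left].
  intros E'. rewrite E, E' in Hk. lra.
Qed.

Lemma hvec_prod_backtrack c : hvec_prod (backtrack c) = horigin.
Proof. apply H3_ext; unfold hvec_prod, backtrack, hvec, hmul, hinv, horigin; simpl; field. Qed.

Lemma polygon_length_backtrack c : 0 <= c -> polygon_length Sg (backtrack c) = c * backtrack_unit.
Proof.
  intros Hc. unfold polygon_length, backtrack, backtrack_unit; simpl.
  rewrite !normL_scale by auto. ring.
Qed.

(* Follow the projection of [w], close the vertical gap [zsum w] with a central
   loop, then backtrack along [s1] so that the horizontal part has length
   exactly [|w|]. *)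
Definition padding (w : list H3) : R :=
  (INR (length w) - polygon_length Sg (map proj w)) / backtrack_unit.

Definition tracking_path (w : list H3) : R -> H3 :=
  polygon horigin (map proj w ++ central_loop (zsum w) ++ backtrack (padding w)).

Definition tracking_constant : R := 4 * sqrt (zmax Sg / cross s1 s2).

Lemma tracking_constant_nonneg : 0 <= tracking_constant.
Proof. unfold tracking_constant. pose proof (sqrt_pos (zmax Sg / cross s1 s2)). lra. Qed.

Lemma central_cost_le D n :
  Rabs D <= INR n * zmax Sg -> 4 * sqrt (Rabs D / cross s1 s2) <= tracking_constant * sqrt (INR n).
Proof.
  intros HD. unfold tracking_constant. rewrite Rmult_assoc.
  apply Rmult_le_compat_l; [lra|]. pose proof (zmax_nonneg Sg).
  rewrite <- sqrt_mult by (apply pos_INR || (apply Rle_mult_inv_pos; lra)).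
  replace (zmax Sg / cross s1 s2 * INR n) with (INR n * zmax Sg / cross s1 s2) by (field; lra).
  apply sqrt_le_1_alt, Rmult_le_compat_r; [apply Rlt_le, Rinv_0_lt_compat; lra|lra].
Qed.

Section Word.

Variable w : list H3.
Hypothesis w_in_Sg : forall s, In s w -> In s Sg.

Lemma tracking_path_admissible : admissible Sg (tracking_path w).
Proof. now apply polygon_admissible. Qed.

Lemma tracking_path_0 : tracking_path w 0 = horigin.
Proof. apply polygon_0. Qed.

Lemma tracking_path_1 : tracking_path w 1 = wprod w.
Proof.
  unfold tracking_path. rewrite polygon_1, !hvec_prod_app, hvec_prod_central_loop,
    hvec_prod_backtrack, wprod_split.
  apply H3_ext; unfold hmul, horigin; simpl; ring.
Qed.

Lemma tracking_path_length :
  path_length Sg (tracking_path w) = INR (length w) + polygon_length Sg (central_loop (zsum w)).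
Proof.
  pose proof backtrack_unit_pos.
  assert (0 <= padding w).
  { apply Rle_mult_inv_pos; auto. pose proof (polygon_length_word Sg w glbSg w_in_Sg). lra. }
  unfold tracking_path.
  rewrite path_length_polygon, !polygon_length_app, polygon_length_backtrack by auto.
  unfold padding. field. lra.
Qed.

Lemma tracking_path_length_error :
  Rabs (path_length Sg (tracking_path w) - INR (length w))
    <= tracking_constant * sqrt (INR (length w)).
Proof.
  rewrite tracking_path_length. destruct (polygon_length_central_loop (zsum w)) as [L0 L1].
  replace (INR (length w) + _ - INR (length w))
    with (polygon_length Sg (central_loop (zsum w))) by ring.
  rewrite Rabs_right by lra. eapply Rle_trans; [apply L1|].
  apply central_cost_le, zsum_bound; auto.
Qed.

(* The [i]-th vertex of the geodesic lies a central element [zsum (firstn i w)]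
   away from the [i]-th vertex of the polygon. *)
Lemma tracking_path_vertex_dist i : (i <= length w)%nat ->
  dist_to_path Sg (wprod (firstn i w)) (tracking_path w)
    <= tracking_constant * sqrt (INR (length w)).
Proof.
  intros Hi. set (yi := hvec_prod (map proj (firstn i w))).
  assert (Hon : on_path (tracking_path w) yi).
  { set (vs := map proj w ++ central_loop (zsum w) ++ backtrack (padding w)).
    assert (Hv : firstn i vs = map proj (firstn i w)).
    { unfold vs. rewrite firstn_app, length_map. replace (i - length w)%nat with 0%nat by lia.
      now rewrite app_nil_r, firstn_map. }
    pose proof (polygon_vertex horigin vs i) as Hp.
    rewrite Hv, hmul_0_l in Hp. apply Hp.
    unfold vs. rewrite !length_app, length_map. lia. }
  eapply Rle_trans; [apply (dist_to_path_le Sg glbSg spanning_cc_connected _ _ _ Hon)|].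
  replace yi with (hmul (wprod (firstn i w)) (mkH 0 0 (- zsum (firstn i w)))).
  - eapply Rle_trans; [apply dCC_central_le|]. apply central_cost_le.
    rewrite Rabs_Ropp. eapply Rle_trans.
    + apply zsum_bound. intros s Hs. apply w_in_Sg.
      rewrite <- (firstn_skipn i w). now apply in_or_app; left.
    + apply Rmult_le_compat_r; [apply zmax_nonneg|]. apply le_INR. rewrite length_firstn. lia.
  - rewrite wprod_split. apply H3_ext; unfold yi, hmul; simpl; ring.
Qed.

End Word.

End Tracking.

Lemma min_spelling_length Sg x n w : word_length Sg x n -> min_spelling Sg x w -> length w = n.
Proof.
  intros [[w' [Hw' Hlen']] Hmin] [Hw [_ Hmin']].
  pose proof (Hmin w Hw). pose proof (Hmin' w' Hw'). lia.
Qed.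

Lemma sqrt_eventually_le_linear C eps : 0 <= C -> eps > 0 ->
  exists n0, forall n, (n0 <= n)%nat -> C * sqrt (INR n) <= eps * INR n.
Proof.
  intros HC He. destruct (INR_archimed 1 ((C / eps) ^ 2)) as [n0 Hn0]; [lra|].
  exists n0. intros n Hn. apply le_INR in Hn.
  assert (Hs : C / eps <= sqrt (INR n)).
  { rewrite <- (sqrt_pow2 (C / eps)) by (apply Rle_mult_inv_pos; lra).
    apply sqrt_le_1_alt. lra. }
  assert (C <= eps * sqrt (INR n)).
  { apply (Rmult_le_compat_l eps) in Hs; [|lra].
    replace (eps * (C / eps)) with C in Hs by (field; lra). lra. }
  rewrite <- (sqrt_sqrt (INR n)) at 2 by apply pos_INR.
  rewrite <- Rmult_assoc. apply Rmult_le_compat_r; [apply sqrt_pos|lra].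
Qed.

Theorem mainTheorem14 (S : list H3)
  (HSZ : forall s, In s S -> inHZ s)
  (Hsym : forall s, In s S -> In (hinv s) S)
  (Hgen : generates S) :
  exists C : R, forall eps : R, eps > 0 ->
    exists n0 : nat, forall (x : H3) (n : nat),
      inHZ x -> word_length S x n -> (n0 <= n)%nat ->
      forall w : list H3, min_spelling S x w ->
        exists g : R -> H3, lin_tracked S eps w x g /\
          Rabs (path_length S g - INR n) <= C * sqrt (INR n).
Proof.
  destruct (generates_cross_pos S Hgen) as [s1 [s2 [H1 [H2 Hk]]]].
  pose proof (Hsym s1 H1) as H1'. pose proof (Hsym s2 H2) as H2'.
  exists (tracking_constant S s1 s2). intros eps Heps.
  destruct (sqrt_eventually_le_linear (tracking_constant S s1 s2) eps) as [n0 Hn0];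
    [apply tracking_constant_nonneg|auto|].
  exists n0. intros x n _ Hxn Hn w Hw.
  pose proof (min_spelling_length _ _ _ _ Hxn Hw) as <-.
  destruct Hw as [[HwS <-] _].
  exists (tracking_path S s1 s2 w). split; [split; [|split; [|split]]|].
  - now apply tracking_path_admissible.
  - apply tracking_path_0.
  - now apply tracking_path_1.
  - intros i Hi. eapply Rle_trans; [now apply tracking_path_vertex_dist|]. now apply Hn0.
  - now apply tracking_path_length_error.
Qed.
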